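(* For every $a\leq 0$ there exists a divergent series of positive real terms $\sum_{n=1}^{\infty}x_n$ such that $\{\sum_{n=1}^{\infty}(x_n-x_{\sigma(n)}) : \sigma\in S_\infty,\ \sum_{n=1}^{\infty}(x_n-x_{\sigma(n)})\text{ converges}\}=[a,\infty)$.
   Context: $S_\infty$ denotes the set of all permutations of $\mathbb{N}$. *)

From Stdlib Require Import Reals.
Open Scope R_scope.

Definition is_perm (sigma : nat -> nat) : Prop :=
  (forall m n : nat, sigma m = sigma n -> m = n) /\
  (forall m : nat, exists n : nat, sigma n = m).

From Stdlib Require Import Reals Lra Lia List Permutation FinFun ConstructiveEpsilon Classical.
Open Scope R_scope.

(* Let h n = 1/(n+1) and pick a permutation pi with sum (h n - h (pi n)) = -a; put
   x n = 1 + h (pi n), a divergent series.  Then x n - x (sigma n) = h (pi n) - h (pi (sigma n))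
   is the difference of the series sum (h n - h (pi (sigma n))) and sum (h n - h (pi n)).
   The partial sums of the first are non-negative (n distinct values of the decreasing h
   sum to at most its first n values), so every convergent such series has sum >= a.
   Conversely, a greedy construction realises every t >= 0 as sum (h n - h (rho n)), and
   sigma = pi^-1 o rho then gives the sum t + a. *)

(* [psum f n] is the sum of the first [n] terms, whereas [sum_f_R0 f n] has [n + 1]. *)
Fixpoint psum (f : nat -> R) (n : nat) : R :=
  match n with O => 0 | S n' => psum f n' + f n' end.

Lemma psum_minus f g n : psum (fun k => f k - g k) n = psum f n - psum g n.
Proof. induction n as [|n IH]; simpl; [lra | rewrite IH; lra]. Qed.

Lemma psum_ge_INR f n : (forall k, 1 <= f k) -> INR n <= psum f n.
Proof.
  intros Hf. induction n as [|n IH]; simpl psum; [simpl; lra|].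
  rewrite S_INR. specialize (Hf n). lra.
Qed.

Lemma infinite_sum_Un_cv_psum f l : infinite_sum f l <-> Un_cv (psum f) l.
Proof.
  assert (Hsum : forall n, sum_f_R0 f n = psum f (S n)).
  { induction n as [|n IH]; simpl; [lra|]. rewrite IH. reflexivity. }
  split; intros H eps Heps; destruct (H eps Heps) as [N HN].
  - exists (S N). intros [|n] Hn; [lia|]. rewrite <- Hsum. apply HN. lia.
  - exists N. intros n Hn. rewrite Hsum. apply HN. lia.
Qed.

Lemma infinite_sum_ext f g l :
  (forall n, f n = g n) -> infinite_sum f l -> infinite_sum g l.
Proof.
  intros E H eps Heps. destruct (H eps Heps) as [N HN]. exists N.
  intros n Hn. rewrite <- (sum_eq f g n) by auto. auto.
Qed.

Lemma infinite_sum_minus f g l1 l2 :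
  infinite_sum f l1 -> infinite_sum g l2 ->
  infinite_sum (fun n => f n - g n) (l1 - l2).
Proof.
  rewrite !infinite_sum_Un_cv_psum. intros Hf Hg.
  apply (Un_cv_ext (fun n => psum f n - psum g n)).
  - intros n. symmetry. apply psum_minus.
  - apply CV_minus; assumption.
Qed.

Lemma cv_infty_not_Un_cv u l : cv_infty u -> ~ Un_cv u l.
Proof.
  intros Hu Hcv. destruct (Hu (l + 1)) as [N1 H1].
  destruct (Hcv 1 Rlt_0_1) as [N2 H2].
  specialize (H1 (max N1 N2) ltac:(lia)). specialize (H2 (max N1 N2) ltac:(lia)).
  unfold Rdist in H2. apply Rabs_def2 in H2. lra.
Qed.

Lemma psum_cv_infty f : (forall k, 1 <= f k) -> cv_infty (psum f).
Proof.
  intros Hf M. destruct (INR_archimed 1 M Rlt_0_1) as [N HN].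
  exists N. intros n Hn. pose proof (psum_ge_INR f n Hf).
  apply le_INR in Hn. lra.
Qed.

Lemma is_perm_comp f g : is_perm f -> is_perm g -> is_perm (fun n => f (g n)).
Proof.
  intros [Finj Fsurj] [Ginj Gsurj]. split.
  - intros m n E. apply Ginj, Finj, E.
  - intros m. destruct (Fsurj m) as [k Hk]. destruct (Gsurj k) as [n Hn].
    exists n. congruence.
Qed.

Lemma is_perm_inverse f :
  is_perm f -> exists g, is_perm g /\ forall m, f (g m) = m.
Proof.
  intros [Finj Fsurj].
  set (g m := constructive_ground_epsilon_nat (fun n => f n = m)
                (fun n => Nat.eq_dec (f n) m) (Fsurj m)).
  assert (Hfg : forall m, f (g m) = m)
    by (intros m; apply (constructive_ground_epsilon_spec_nat (fun n => f n = m))).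
  exists g. repeat split; auto.
  - intros m n E. rewrite <- (Hfg m), <- (Hfg n), E. reflexivity.
  - intros m. exists (f m). apply Finj, Hfg.
Qed.
Definition listmax (l : list nat) : nat := fold_right Nat.max 0%nat l.

Lemma listmax_ge x l : In x l -> (x <= listmax l)%nat.
Proof.
  induction l as [|y l IH]; simpl; [tauto|].
  intros [->|Hx]; [lia|]. specialize (IH Hx). lia.
Qed.

Lemma listmax_In l : l <> nil -> In (listmax l) l.
Proof.
  induction l as [|x l IH]; [congruence|]. intros _. simpl.
  destruct l as [|y l']; [left; simpl; lia|].
  destruct (Nat.max_spec x (listmax (y :: l'))) as [[_ ->]|[_ ->]].
  - right. apply IH. discriminate.
  - now left.
Qed.

Lemma NoDup_length_le_listmax l : NoDup l -> (length l <= S (listmax l))%nat.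
Proof.
  intros Hl. rewrite <- (length_seq (S (listmax l)) 0).
  apply NoDup_incl_length; [assumption|].
  intros x Hx. apply in_seq. apply listmax_ge in Hx. lia.
Qed.

Lemma ex_not_In (l : list nat) : exists k, ~ In k l.
Proof.
  exists (S (listmax l)). intros H. apply listmax_ge in H. lia.
Qed.

Definition not_In_dec (l : list nat) (k : nat) : {~ In k l} + {~ ~ In k l} :=
  match in_dec Nat.eq_dec k l with
  | left H => right (fun H' => H' H)
  | right H => left H
  end.

Definition mex (l : list nat) : nat :=
  proj1_sig (epsilon_smallest _ (not_In_dec l) (ex_not_In l)).

Lemma mex_not_In l : ~ In (mex l) l.
Proof. exact (proj1 (proj2_sig (epsilon_smallest _ (not_In_dec l) (ex_not_In l)))). Qed.

Lemma In_lt_mex l k : (k < mex l)%nat -> In k l.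
Proof.
  intros Hk. apply NNPP. intros Hn.
  pose proof (proj2 (proj2_sig (epsilon_smallest _ (not_In_dec l) (ex_not_In l))) k Hn).
  unfold mex in Hk. lia.
Qed.

Lemma mex_le_incl l l' : incl l l' -> (mex l <= mex l')%nat.
Proof.
  intros Hll'. destruct (Nat.le_gt_cases (mex l) (mex l')) as [|Hlt]; [assumption|].
  exfalso. apply (mex_not_In l'), Hll', In_lt_mex, Hlt.
Qed.

Lemma mex_lt_cons l : (mex l < mex (mex l :: l))%nat.
Proof.
  pose proof (mex_le_incl l (mex l :: l) ltac:(intros x Hx; now right)).
  destruct (Nat.eq_dec (mex l) (mex (mex l :: l))) as [E|]; [|lia].
  exfalso. apply (mex_not_In (mex l :: l)). rewrite <- E. now left.
Qed.

Lemma mex_le_length l : NoDup l -> (mex l <= length l)%nat.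
Proof.
  intros Hl. rewrite <- (length_seq (mex l) 0).
  apply NoDup_incl_length; [apply seq_NoDup|].
  intros k Hk. apply In_lt_mex. apply in_seq in Hk. lia.
Qed.

Lemma Permutation_seq_mex l :
  NoDup l -> (forall x, In x l -> (x < mex l)%nat) -> Permutation l (seq 0 (mex l)).
Proof.
  intros Hl Hlt. apply NoDup_Permutation; [assumption|apply seq_NoDup|].
  intros x. rewrite in_seq. split.
  - intros Hx. specialize (Hlt x Hx). lia.
  - intros Hx. apply In_lt_mex. lia.
Qed.

Section Rearrangement.

Variable h : nat -> R.

Definition lsum (l : list nat) : R := fold_right (fun k acc => h k + acc) 0 l.

Lemma lsum_app l l' : lsum (l ++ l') = lsum l + lsum l'.
Proof. induction l as [|x l IH]; simpl; [lra | rewrite IH; lra]. Qed.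

Lemma lsum_perm l l' : Permutation l l' -> lsum l = lsum l'.
Proof. induction 1; simpl; lra. Qed.

Lemma lsum_map_seq g n : lsum (map g (seq 0 n)) = psum (fun k => h (g k)) n.
Proof.
  induction n as [|n IH]; [reflexivity|].
  rewrite seq_S, map_app, lsum_app, IH. simpl. lra.
Qed.

Lemma lsum_seq n : lsum (seq 0 n) = psum h n.
Proof. rewrite <- (map_id (seq 0 n)). apply lsum_map_seq. Qed.

Hypothesis h_antitone : forall m n, (m <= n)%nat -> h n <= h m.

(* Remove the largest element, which is at least [length l - 1] by pigeonhole. *)
Lemma lsum_le_psum l : NoDup l -> lsum l <= psum h (length l).
Proof.
  remember (length l) as n eqn:En. revert l En.
  induction n as [|n IH]; intros l En Hl.
  - destruct l; [simpl; lra | discriminate].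
  - assert (Hmax : In (listmax l) l) by (apply listmax_In; intros ->; discriminate).
    destruct (in_split _ _ Hmax) as (l1 & l2 & El).
    assert (Hge : (n <= listmax l)%nat)
      by (pose proof (NoDup_length_le_listmax l Hl); lia).
    rewrite El in Hl, En. rewrite El.
    rewrite <- (lsum_perm _ _ (Permutation_middle l1 l2 (listmax l))). simpl.
    rewrite length_app in En. simpl in En.
    pose proof (IH (l1 ++ l2) ltac:(rewrite length_app; lia) (NoDup_remove_1 _ _ _ Hl)).
    pose proof (h_antitone _ _ Hge). lra.
Qed.

Lemma psum_comp_injective_le g n :
  Injective g -> psum (fun k => h (g k)) n <= psum h n.
Proof.
  intros Hg. rewrite <- lsum_map_seq.
  rewrite <- (length_seq n 0) at 2. rewrite <- (length_map g).
  apply lsum_le_psum, Injective_map_NoDup, seq_NoDup. assumption.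
Qed.

Lemma perm_diff_sum_lower_bound pi tau b s :
  Injective tau ->
  infinite_sum (fun n => h n - h (pi n)) b ->
  infinite_sum (fun n => h (pi n) - h (tau n)) s -> - b <= s.
Proof.
  rewrite !infinite_sum_Un_cv_psum. intros Htau Hb Hs.
  eapply Rle_cv_lim; [| apply CV_opp, Hb | exact Hs].
  intros n. unfold opp_seq. rewrite !psum_minus.
  pose proof (psum_comp_injective_le tau n Htau). lra.
Qed.

End Rearrangement.

Section Greedy.

Variable h : nat -> R.
Hypothesis h_pos : forall n, 0 < h n.
Hypothesis h_antitone : forall m n, (m <= n)%nat -> h n <= h m.
Hypothesis h_half : forall n, h (2 * n + 1) <= h n / 2.
Hypothesis h_cv0 : Un_cv h 0.
Hypothesis h_psum_cv_infty : cv_infty (psum h).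

Variable s : R.

(* Greedy construction of [rho] with [sum (h n - h (rho n)) = s]: while the partial sum is
   below [s], send [n] to a fresh index so far out that the term is at least [h n / 2];
   otherwise send [n] to the least unused index, which keeps the term non-positive. *)
Definition far (n : nat) (l : list nat) : nat := S (2 * n + listmax l).

Definition greedy_next (n : nat) (l : list nat) : nat :=
  if Rlt_dec (psum h n - lsum h l) s then far n l else mex l.

Fixpoint chosen (n : nat) : list nat :=
  match n with
  | O => nil
  | S n' => greedy_next n' (chosen n') :: chosen n'
  end.

Definition greedy (n : nat) : nat := greedy_next n (chosen n).

Definition gap (n : nat) : R := psum h n - lsum h (chosen n).

Lemma greedy_below n : gap n < s -> greedy n = far n (chosen n).
Proof. unfold greedy, greedy_next, gap. destruct Rlt_dec; tauto. Qed.

Lemma greedy_above n : s <= gap n -> greedy n = mex (chosen n).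
Proof. unfold greedy, greedy_next, gap. destruct Rlt_dec; [lra | reflexivity]. Qed.

Lemma gap_S n : gap (S n) = gap n + h n - h (greedy n).
Proof. unfold gap. simpl. unfold greedy. lra. Qed.

Lemma lsum_chosen n : lsum h (chosen n) = psum (fun k => h (greedy k)) n.
Proof. induction n as [|n IH]; [reflexivity|]. simpl. rewrite IH. unfold greedy. lra. Qed.

Lemma In_chosen n x : In x (chosen n) <-> exists k, (k < n)%nat /\ greedy k = x.
Proof.
  induction n as [|n IH]; simpl.
  - split; [tauto | intros (k & Hk & _); lia].
  - fold (greedy n). rewrite IH. split.
    + intros [<- | (k & Hk & E)]; [exists n | exists k]; split; auto.
    + intros (k & Hk & E). destruct (Nat.eq_dec k n) as [->|]; [now left|].
      right. exists k. split; [lia | assumption].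
Qed.

Lemma greedy_not_In_chosen n : ~ In (greedy n) (chosen n).
Proof.
  destruct (Rlt_dec (gap n) s) as [Hlt|Hge].
  - rewrite greedy_below by assumption. intros Hin.
    apply listmax_ge in Hin. unfold far in Hin. lia.
  - rewrite greedy_above by lra. apply mex_not_In.
Qed.

Lemma chosen_NoDup n : NoDup (chosen n).
Proof. induction n; constructor; [apply greedy_not_In_chosen | assumption]. Qed.

Lemma length_chosen n : length (chosen n) = n.
Proof. induction n; simpl; auto. Qed.

Lemma greedy_injective : Injective greedy.
Proof.
  intros i j E.
  destruct (Nat.lt_total i j) as [Hij|[Hij|Hij]]; [exfalso | assumption | exfalso].
  - apply (greedy_not_In_chosen j), In_chosen. eauto.
  - apply (greedy_not_In_chosen i), In_chosen. eauto.
Qed.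

Lemma gap_S_below n : gap n < s -> gap n + h n / 2 <= gap (S n) <= gap n + h n.
Proof.
  intros Hlt. rewrite gap_S, greedy_below by assumption.
  assert (h (far n (chosen n)) <= h n / 2).
  { eapply Rle_trans; [apply h_antitone | apply h_half]. unfold far. lia. }
  pose proof (h_pos (far n (chosen n))). lra.
Qed.

Lemma gap_S_above n : s <= gap n -> gap n - h (mex (chosen n)) <= gap (S n) <= gap n.
Proof.
  intros Hge. rewrite gap_S, greedy_above by assumption.
  assert (h n <= h (mex (chosen n))).
  { apply h_antitone. rewrite <- (length_chosen n) at 2. apply mex_le_length, chosen_NoDup. }
  pose proof (h_pos n). lra.
Qed.

(* Below [s] the gap grows by at least half of the divergent series. *)
Lemma gap_above_infinitely_often n0 : exists n, (n0 <= n)%nat /\ s <= gap n.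
Proof.
  apply NNPP. intros Hnot.
  assert (Hbelow : forall n, (n0 <= n)%nat -> gap n < s).
  { intros n Hn. apply Rnot_le_lt. intros Hge. apply Hnot. eauto. }
  assert (Hgrow : forall k, gap n0 + (psum h (n0 + k) - psum h n0) / 2 <= gap (n0 + k)).
  { induction k as [|k IH]; [rewrite Nat.add_0_r; lra|].
    rewrite Nat.add_succ_r. simpl psum.
    pose proof (gap_S_below _ (Hbelow (n0 + k)%nat ltac:(lia))). lra. }
  destruct (h_psum_cv_infty (2 * (s - gap n0) + psum h n0)) as [N HN].
  specialize (HN (n0 + N)%nat ltac:(lia)). specialize (Hgrow N).
  specialize (Hbelow (n0 + N)%nat ltac:(lia)). lra.
Qed.

Lemma mex_chosen_mono m n : (m <= n)%nat -> (mex (chosen m) <= mex (chosen n))%nat.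
Proof.
  intros Hmn. apply mex_le_incl. intros x. rewrite !In_chosen.
  intros (k & Hk & E). exists k. split; [lia | assumption].
Qed.

Lemma mex_chosen_S_above n : s <= gap n -> (mex (chosen n) < mex (chosen (S n)))%nat.
Proof.
  intros Hge. simpl. fold (greedy n). rewrite greedy_above by assumption. apply mex_lt_cons.
Qed.

Lemma mex_chosen_unbounded m : exists n, (m <= mex (chosen n))%nat.
Proof.
  induction m as [|m [n Hn]]; [exists O; lia|].
  destruct (gap_above_infinitely_often n) as (n' & Hn' & Hge).
  exists (S n'). pose proof (mex_chosen_S_above n' Hge).
  pose proof (mex_chosen_mono n n' Hn'). lia.
Qed.

Lemma greedy_surjective m : exists n, greedy n = m.
Proof.
  destruct (mex_chosen_unbounded (S m)) as [n Hn].
  assert (Hin : In m (chosen n)) by (apply In_lt_mex; lia).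
  apply In_chosen in Hin. destruct Hin as (k & _ & E). eauto.
Qed.

Lemma greedy_is_perm : is_perm greedy.
Proof. split; [apply greedy_injective | apply greedy_surjective]. Qed.

Lemma gap_eq0 n : (forall x, In x (chosen n) -> (x < mex (chosen n))%nat) -> gap n = 0.
Proof.
  intros Hlt.
  pose proof (Permutation_seq_mex _ (chosen_NoDup n) Hlt) as Hperm.
  assert (Emex : mex (chosen n) = n)
    by (pose proof (Permutation_length Hperm) as E; rewrite length_chosen, length_seq in E; auto).
  unfold gap. rewrite (lsum_perm h _ _ Hperm), Emex, lsum_seq. lra.
Qed.

(* If the gap stays above [s], every step takes the least unused index; once these
   exceed all earlier choices, [chosen n] is exactly [0 .. n-1]. *)
Lemma gap_eq0_of_always_above n0 :
  (forall n, (n0 <= n)%nat -> s <= gap n) -> exists n, (n0 <= n)%nat /\ gap n = 0.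
Proof.
  intros Habove. destruct (mex_chosen_unbounded (S (listmax (chosen n0)))) as [n1 Hn1].
  exists (Nat.max n0 n1). split; [lia|]. apply gap_eq0.
  intros x Hx. apply In_chosen in Hx. destruct Hx as (k & Hk & <-).
  destruct (Nat.lt_ge_cases k n0) as [Hkn0|Hkn0].
  - assert (In (greedy k) (chosen n0)) by (apply In_chosen; eauto).
    pose proof (listmax_ge _ _ H).
    pose proof (mex_chosen_mono n1 (Nat.max n0 n1) ltac:(lia)). lia.
  - pose proof (mex_chosen_S_above k (Habove k Hkn0)) as Hlt.
    rewrite <- greedy_above in Hlt by (apply Habove; assumption).
    pose proof (mex_chosen_mono (S k) (Nat.max n0 n1) ltac:(lia)). lia.
Qed.

Lemma stays_from (P : nat -> Prop) N :
  (forall n, (N <= n)%nat -> P n -> P (S n)) ->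
  forall n0, (N <= n0)%nat -> P n0 -> forall n, (n0 <= n)%nat -> P n.
Proof. intros Hstep n0 Hn0 Hp n Hn. induction Hn; auto. apply Hstep; auto. lia. Qed.

Hypothesis s_nonneg : 0 <= s.

Lemma gap_le_infinitely_often e N : 0 < e -> exists n, (N <= n)%nat /\ gap n <= s + e.
Proof.
  intros He. destruct (classic (exists n, (N <= n)%nat /\ gap n < s)) as [(n & Hn & Hlt)|Hnot].
  - exists n. split; [assumption | lra].
  - destruct (gap_eq0_of_always_above N) as (n & Hn & E).
    + intros n Hn. apply Rnot_lt_le. intros Hlt. apply Hnot. eauto.
    + exists n. split; [assumption | lra].
Qed.

(* Eventually both the steps up ([h n]) and the steps down ([h (mex _)]) are below [e],
   so the band [s - e, s + e] is entered and never left. *)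
Lemma gap_cv : Un_cv gap s.
Proof.
  intros eps Heps. set (e := eps / 2).
  destruct (h_cv0 e ltac:(unfold e; lra)) as [M HM].
  assert (Hsmall : forall n, (M <= n)%nat -> h n < e).
  { intros n Hn. specialize (HM n Hn). unfold Rdist in HM.
    rewrite Rminus_0_r, Rabs_pos_eq in HM by (apply Rlt_le, h_pos). assumption. }
  destruct (mex_chosen_unbounded M) as [n1 Hn1].
  set (N := Nat.max n1 M).
  assert (Hup : forall n, (N <= n)%nat -> gap n <= s + e -> gap (S n) <= s + e).
  { intros n Hn Hgap. destruct (Rlt_dec (gap n) s) as [Hlt|Hge].
    - pose proof (gap_S_below n Hlt). pose proof (Hsmall n ltac:(lia)). lra.
    - pose proof (gap_S_above n (Rnot_lt_le _ _ Hge)). lra. }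
  assert (Hlow : forall n, (N <= n)%nat -> s - e <= gap n -> s - e <= gap (S n)).
  { intros n Hn Hgap. destruct (Rlt_dec (gap n) s) as [Hlt|Hge].
    - pose proof (gap_S_below n Hlt). pose proof (h_pos n). lra.
    - pose proof (gap_S_above n (Rnot_lt_le _ _ Hge)).
      pose proof (Hsmall (mex (chosen n))
                    ltac:(pose proof (mex_chosen_mono n1 n ltac:(lia)); lia)). lra. }
  destruct (gap_above_infinitely_often N) as (nl & Hnl & Hl).
  destruct (gap_le_infinitely_often e N ltac:(unfold e; lra)) as (nu & Hnu & Hu).
  exists (Nat.max nl nu). intros n Hn.
  pose proof (stays_from _ N Hup nu Hnu Hu n ltac:(lia)).
  pose proof (stays_from _ N Hlow nl Hnl ltac:(unfold e; lra) n ltac:(lia)).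
  unfold Rdist. apply Rabs_def1; unfold e in *; lra.
Qed.

Theorem perm_diff_sum_exists :
  exists rho, is_perm rho /\ infinite_sum (fun n => h n - h (rho n)) s.
Proof.
  exists greedy. split; [apply greedy_is_perm|].
  apply infinite_sum_Un_cv_psum. apply (Un_cv_ext gap); [|apply gap_cv].
  intros n. unfold gap. rewrite psum_minus, lsum_chosen. reflexivity.
Qed.

End Greedy.

Definition harmonic (n : nat) : R := / INR (S n).

Lemma harmonic_pos n : 0 < harmonic n.
Proof. apply Rinv_0_lt_compat, lt_0_INR. lia. Qed.

Lemma harmonic_antitone m n : (m <= n)%nat -> harmonic n <= harmonic m.
Proof.
  intros Hmn. apply Rinv_le_contravar; [apply lt_0_INR; lia | apply le_INR; lia].
Qed.

Lemma harmonic_double n : harmonic (2 * n + 1) = harmonic n / 2.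
Proof.
  unfold harmonic. replace (S (2 * n + 1)) with (2 * S n)%nat by lia.
  rewrite mult_INR. simpl (INR 2). pose proof (lt_0_INR (S n) ltac:(lia)).
  field. lra.
Qed.

Lemma harmonic_cv0 : Un_cv harmonic 0.
Proof.
  intros eps Heps. destruct (INR_archimed eps 1 Heps) as [N HN].
  exists N. intros n Hn. unfold Rdist. rewrite Rminus_0_r.
  rewrite Rabs_pos_eq by (apply Rlt_le, harmonic_pos).
  assert (INR N <= INR (S n)) by (apply le_INR; lia).
  pose proof (lt_0_INR (S n) ltac:(lia)). unfold harmonic.
  apply Rmult_lt_reg_l with (INR (S n)); [assumption|].
  rewrite Rinv_r by lra. nra.
Qed.

Lemma psum_harmonic_block m k :
  INR k * harmonic (m + k - 1) <= psum harmonic (m + k) - psum harmonic m.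
Proof.
  induction k as [|k IH].
  - rewrite Nat.add_0_r. simpl. lra.
  - rewrite Nat.add_succ_r, S_INR. simpl psum.
    replace (S (m + k) - 1)%nat with (m + k)%nat by lia.
    pose proof (harmonic_antitone (m + k - 1) (m + k) ltac:(lia)).
    pose proof (pos_INR k). nra.
Qed.

Lemma psum_harmonic_double m :
  (1 <= m)%nat -> psum harmonic m + / 2 <= psum harmonic (2 * m).
Proof.
  intros Hm. pose proof (psum_harmonic_block m m) as H.
  replace (m + m)%nat with (2 * m)%nat in H by lia.
  replace (INR m * harmonic (2 * m - 1)) with (/ 2) in H; [lra|].
  unfold harmonic. replace (S (2 * m - 1)) with (2 * m)%nat by lia.
  rewrite mult_INR. simpl (INR 2). pose proof (lt_0_INR m ltac:(lia)). field. lra.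
Qed.

Lemma psum_harmonic_cv_infty : cv_infty (psum harmonic).
Proof.
  assert (Hpow : forall N, INR N / 2 <= psum harmonic (2 ^ N)).
  { induction N as [|N IH].
    - simpl. pose proof (harmonic_pos 0). lra.
    - rewrite Nat.pow_succ_r', S_INR.
      pose proof (psum_harmonic_double (2 ^ N) ltac:(apply Nat.le_succ_l, Nat.neq_0_lt_0, Nat.pow_nonzero; lia)).
      lra. }
  assert (Hmono : forall m n, (m <= n)%nat -> psum harmonic m <= psum harmonic n).
  { intros m n Hmn. induction Hmn; simpl; [lra|]. pose proof (harmonic_pos m0). lra. }
  intros M. destruct (INR_archimed 1 (2 * M) Rlt_0_1) as [N HN].
  exists (2 ^ N)%nat. intros n Hn. pose proof (Hpow N). pose proof (Hmono _ _ Hn). lra.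
Qed.

Lemma harmonic_perm_diff_sum s :
  0 <= s -> exists rho, is_perm rho /\ infinite_sum (fun n => harmonic n - harmonic (rho n)) s.
Proof.
  intros Hs. apply perm_diff_sum_exists.
  - exact harmonic_pos.
  - exact harmonic_antitone.
  - intros n. rewrite harmonic_double. lra.
  - exact harmonic_cv0.
  - exact psum_harmonic_cv_infty.
  - exact Hs.
Qed.

Theorem mainTheorem4 :
  forall a : R, a <= 0 ->
  exists x : nat -> R,
    (forall n : nat, 0 < x n) /\
    ~ (exists l : R, infinite_sum x l) /\
    (forall s : R,
       (exists sigma : nat -> nat,
          is_perm sigma /\ infinite_sum (fun n => x n - x (sigma n)) s)
       <-> a <= s).
Proof.
  intros a Ha.
  destruct (harmonic_perm_diff_sum (- a) ltac:(lra)) as (pi & Hpi & Hsum_pi).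
  exists (fun n => 1 + harmonic (pi n)). split; [|split].
  - intros n. pose proof (harmonic_pos (pi n)). lra.
  - intros [l Hl]. apply infinite_sum_Un_cv_psum in Hl. revert Hl.
    apply cv_infty_not_Un_cv, psum_cv_infty.
    intros n. pose proof (harmonic_pos (pi n)). lra.
  - intros s. split.
    + intros (sigma & Hsigma & Hs). rewrite <- (Ropp_involutive a).
      apply (perm_diff_sum_lower_bound harmonic harmonic_antitone pi (fun n => pi (sigma n))).
      * exact (proj1 (is_perm_comp _ _ Hpi Hsigma)).
      * exact Hsum_pi.
      * revert Hs. apply infinite_sum_ext. intros n. ring.
    + intros Has.
      destruct (harmonic_perm_diff_sum (s - a) ltac:(lra)) as (rho & Hrho & Hsum_rho).
      destruct (is_perm_inverse pi Hpi) as (pi_inv & Hpi_inv & Hpi_pi_inv).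
      exists (fun n => pi_inv (rho n)). split; [apply is_perm_comp; assumption|].
      replace s with ((s - a) - (- a)) by ring.
      generalize (infinite_sum_minus _ _ _ _ Hsum_rho Hsum_pi).
      apply infinite_sum_ext. intros n. rewrite Hpi_pi_inv. ring.
Qed.
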